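(* Let $(X,\|\cdot\|)$ be a normed linear space, let $I$ be a non-trivial admissible ideal in $\mathbb{N}$, let $x=\{x_k\}_{k\in\mathbb{N}}$ be a sequence in $X$ and let $r>0$. Then the set $I\text{-}st\text{-}\mathrm{LIM}_x^r$ is convex.
   Context: An ideal $I$ in $\mathbb{N}$ is a family of subsets of $\mathbb{N}$ containing $\emptyset$, closed under finite unions and under taking subsets; it is non-trivial if $\mathbb{N}\notin I$ and admissible if $\{n\}\in I$ for every $n$. For $r\ge0$, $x$ is $r$-$I$-statistically convergent to $\xi\in X$ if for every $\varepsilon>0$ and $\delta>0$, $\{n\in\mathbb{N}:\frac1n|\{k\le n:\|x_k-\xi\|\ge r+\varepsilon\}|\ge\delta\}\in I$; $I\text{-}st\text{-}\mathrm{LIM}_x^r$ is the set of all such $\xi$. *)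

From HB Require Import structures.
From mathcomp Require Import all_boot all_order all_algebra.
From mathcomp Require Import all_classical all_reals all_analysis.
Set Implicit Arguments. Unset Strict Implicit. Unset Printing Implicit Defensive.
Import Order.TTheory GRing.Theory Num.Theory.
Import numFieldNormedType.Exports.
Local Open Scope classical_set_scope.
Local Open Scope ring_scope.

(* An ideal on N = {1,2,...}; we represent subsets of N as sets of nat
   (the element 0 is irrelevant for the sets considered below). *)
Definition is_ideal (I : set (set nat)) : Prop :=
  I set0 /\
  (forall A B, I A -> I B -> I (A `|` B)) /\
  (forall A B, B `<=` A -> I A -> I B).

Definition natN : set nat := [set n | (0 < n)%N].

Definition nontrivial_ideal (I : set (set nat)) : Prop := ~ I natN.

Definition admissible_ideal (I : set (set nat)) : Prop :=
  forall n : nat, (0 < n)%N -> I [set n].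

Definition count_far (R : realType) (X : normedModType R)
  (x : nat -> X) (xi : X) (r eps : R) (n : nat) : nat :=
  #|[set k : 'I_n.+1 | (0 < (k : nat))%N &&
      `[< (r + eps <= Num.norm (x (k : nat) - xi))%R >] ]|%N.

Definition rI_st_conv (R : realType) (X : normedModType R)
  (I : set (set nat)) (x : nat -> X) (r : R) (xi : X) : Prop :=
  forall eps delta : R, 0 < eps -> 0 < delta ->
    I [set n : nat | (0 < n)%N /\
        delta <= (count_far x xi r eps n)%:R / n%:R].

Definition I_st_LIM (R : realType) (X : normedModType R)
  (I : set (set nat)) (x : nat -> X) (r : R) : set X :=
  [set xi | rI_st_conv I x r xi].

Definition convex_set_in (R : realType) (X : normedModType R) (S : set X) : Prop :=
  forall (a b : X) (t : R), S a -> S b -> 0 <= t -> t <= 1 ->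
    S (t *: a + (1 - t) *: b).

(* Being r-far from a convex combination of a and b forces being r-far from
   a or from b, because the distance to the combination is at most the larger
   of the two distances.  Hence the density of the indices k <= n with x_k far
   from the combination is at most the sum of the corresponding densities for
   a and b, and a superlevel set of such a sum at delta lies in the union of
   the superlevel sets of the summands at delta/2, which belongs to I. *)

From HB Require Import structures.
From mathcomp Require Import all_boot all_order all_algebra.
From mathcomp Require Import all_classical all_reals all_analysis.
Set Implicit Arguments. Unset Strict Implicit. Unset Printing Implicit Defensive.
Import Order.TTheory GRing.Theory Num.Theory.
Import numFieldNormedType.Exports.
Local Open Scope classical_set_scope.
Local Open Scope ring_scope.

Lemma normB_convex_le (R : numDomainType) (V : normedModType R) (y a b : V) (t : R) :
  0 <= t -> t <= 1 ->
  `|y - (t *: a + (1 - t) *: b)| <= t * `|y - a| + (1 - t) * `|y - b|.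
Proof.
move=> t_ge0 t_le1; have t'_ge0 : 0 <= 1 - t by rewrite subr_ge0.
have -> : y - (t *: a + (1 - t) *: b) = t *: (y - a) + (1 - t) *: (y - b).
  by rewrite !scalerBr addrACA -scalerDl [t + _]addrC subrK scale1r opprD.
by apply: le_trans (ler_normD _ _) _; rewrite !normrZ !ger0_norm.
Qed.

Lemma normB_convex_le_max (R : realDomainType) (V : normedModType R) (y a b : V) (t : R) :
  0 <= t -> t <= 1 ->
  `|y - (t *: a + (1 - t) *: b)| <= Num.max `|y - a| `|y - b|.
Proof.
move=> t_ge0 t_le1; have t'_ge0 : 0 <= 1 - t by rewrite subr_ge0.
apply: (le_trans (normB_convex_le y a b t_ge0 t_le1)).
set M := Num.max _ _.
have -> : M = t * M + (1 - t) * M by rewrite -mulrDl addrC subrK mul1r.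
by apply: lerD; apply: ler_wpM2l => //; rewrite le_max lexx ?orbT.
Qed.

Lemma count_far_convex_le (R : realType) (X : normedModType R) (x : nat -> X)
    (a b : X) (t r eps : R) (n : nat) :
  0 <= t -> t <= 1 ->
  (count_far x (t *: a + (1 - t) *: b)%R r eps n
     <= count_far x a r eps n + count_far x b r eps n)%N.
Proof.
move=> t_ge0 t_le1; rewrite /count_far -cardUI.
apply: leq_trans (leq_addr _ _); apply: subset_leq_card.
apply/fintype.subsetP => k; rewrite !inE => /andP[k_gt0 /asboolP far_c].
have := le_trans far_c (normB_convex_le_max (x k) a b t_ge0 t_le1).
rewrite le_max => /orP[far|far]; apply/orP; [left|right];
  by rewrite in_setE /= k_gt0; apply/asboolP.
Qed.

Lemma ideal_superlevel_add (R : realFieldType) (I : set (set nat)) (P : set nat)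
    (f g h : nat -> R) :
  is_ideal I -> (forall n, P n -> h n <= f n + g n) ->
  (forall d, 0 < d -> I [set n | P n /\ d <= f n]) ->
  (forall d, 0 < d -> I [set n | P n /\ d <= g n]) ->
  forall d, 0 < d -> I [set n | P n /\ d <= h n].
Proof.
move=> [_ [I_setU I_sub]] h_le If Ig d d_gt0.
have d2_gt0 : 0 < d / 2 by rewrite divr_gt0.
apply: I_sub (I_setU _ _ (If _ d2_gt0) (Ig _ d2_gt0)) => n /= [Pn d_le].
case: (lerP (d / 2) (f n)) => [fn_ge|fn_lt]; first by left.
case: (lerP (d / 2) (g n)) => [gn_ge|gn_lt]; first by right.
have := le_lt_trans (h_le n Pn) (ltrD fn_lt gn_lt).
by rewrite -splitr ltNge d_le.
Qed.

Theorem theorem3p4 (R : realType) (X : normedModType R)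
  (I : set (set nat)) (x : nat -> X) (r : R) :
  is_ideal I -> nontrivial_ideal I -> admissible_ideal I -> 0 < r ->
  convex_set_in (I_st_LIM I x r).
Proof.
move=> I_ideal _ _ _ a b t Sa Sb t_ge0 t_le1 eps delta eps_gt0 delta_gt0.
apply: (ideal_superlevel_add (P := natN) I_ideal _
          (Sa eps ^~ eps_gt0) (Sb eps ^~ eps_gt0) delta_gt0).
move=> n _; rewrite -mulrDl ler_wpM2r ?invr_ge0 ?ler0n //.
by rewrite -natrD ler_nat count_far_convex_le.
Qed.
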